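(* Let $G_1=(V,D_1)$ and $G_2=(V,D_2)$ be simple directed graphs on the same node set $V$, neither of which is complete. Suppose they have the same out-degree sequence, meaning $|\mathrm{ch}_1(v)|=|\mathrm{ch}_2(v)|$ for every $v\in V$, and that $D_1\neq D_2$. If one of the graphs is acyclic, then there exist $k\in\{1,2\}$, a node $i\in V$, and a set $L$ that is parentally closed with respect to $i$ in $G_k$ such that $|\mathrm{ch}_k(i)\cap L|>|\mathrm{ch}_{3-k}(i)\cap L|$.
   Context: A directed graph $G=(V,D)$ has edge set $D\subseteq V\times V$ of ordered pairs $(i,j)$, $i\neq j$. It is simple if $(i,j)$ and $(j,i)$ are never both in $D$. It is complete if every pair of distinct nodes is adjacent. $\mathrm{ch}_k(i)$ and $\mathrm{pa}_k(i)$ are the children and parents of $i$ in $G_k$, and $\mathrm{ne}_k(i)$ is the set of nodes adjacent to $i$ in $G_k$. For a set $L$ of nodes, $\mathrm{pa}_k(L)=\bigcup_{l\in L}\mathrm{pa}_k(l)$. A subset $L\subseteq\mathrm{ne}_k(i)$ is parentally closed with respect to $i$ in $G_k$ if $\mathrm{pa}_k(L)\cap\mathrm{ne}_k(i)\subseteq L$. *)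

From mathcomp Require Import all_boot.
Set Implicit Arguments. Unset Strict Implicit. Unset Printing Implicit Defensive.

Section DiGraph.
Variable T : finType.
Implicit Types (D : {set T * T}) (i j : T) (L : {set T}).

Definition loopless D : Prop := forall i, (i, i) \notin D.

Definition simple_digraph D : Prop :=
  forall i j, ~ ((i, j) \in D /\ (j, i) \in D).

Definition complete_digraph D : Prop :=
  forall i j, i != j -> (i, j) \in D \/ (j, i) \in D.

Definition ch D i : {set T} := [set j | (i, j) \in D].
Definition pa D i : {set T} := [set j | (j, i) \in D].
Definition ne D i : {set T} := ch D i :|: pa D i.
Definition paS D L : {set T} := \bigcup_(l in L) pa D l.

Definition parentally_closed D i L : Prop :=
  L \subset ne D i /\ (paS D L :&: ne D i) \subset L.

Definition edge_rel D : rel T := fun x y => (x, y) \in D.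

Definition acyclic D : Prop :=
  forall i j, (i, j) \in D -> ~~ connect (edge_rel D) j i.
End DiGraph.

From mathcomp Require Import all_boot.

Set Implicit Arguments.
Unset Strict Implicit.
Unset Printing Implicit Defensive.

(* If some child of i in one graph is not a neighbour of i in the other, the
   neighbourhood of i in the other graph is a parentally closed set that
   separates the two out-degrees of i.  Otherwise both graphs have the same
   skeleton and differ only by reversed edges; equal out-degrees force every
   node to have as many reversed out-edges as reversed in-edges, so the nodes
   with a reversed out-edge form a nonempty set without sinks in either graph,
   which contradicts acyclicity. *)

Section Sets.
Variable T : finType.
Implicit Types A B L : {set T}.

Lemma card_setI_gt A B L :
  #|A| = #|B| -> A \subset L -> ~~ (B \subset L) -> #|B :&: L| < #|A :&: L|.
Proof.
move=> eqAB sAL /subsetPn [x Bx Lx].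
rewrite (setIidPl sAL) eqAB; apply: proper_card; apply/properP.
by split; [exact: subsetIl | exists x; rewrite // inE (negbTE Lx) andbF].
Qed.

Lemma cardsD_sym A B : #|A| = #|B| -> #|A :\: B| = #|B :\: A|.
Proof. by move=> eqAB; rewrite !cardsD setIC eqAB. Qed.

End Sets.

Section DiGraph.
Variable T : finType.
Implicit Types (D : {set T * T}) (i j : T) (S : {set T}).

Lemma eq_digraph_ch D1 D2 : (forall i, ch D1 i = ch D2 i) -> D1 = D2.
Proof.
move=> eq_ch; apply/setP => -[i j].
by have /setP/(_ j) := eq_ch i; rewrite !inE.
Qed.

Lemma ne_parentally_closed D i : parentally_closed D i (ne D i).
Proof. by split; [exact: subxx | exact: subsetIr]. Qed.

Lemma parentally_closed_ch_gt D1 D2 i :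
  #|ch D1 i| = #|ch D2 i| -> ~~ (ch D2 i \subset ne D1 i) ->
  exists L, parentally_closed D1 i L /\ #|ch D2 i :&: L| < #|ch D1 i :&: L|.
Proof.
move=> eq_deg nsub; exists (ne D1 i); split; first exact: ne_parentally_closed.
by apply: card_setI_gt => //; exact: subsetUl.
Qed.

(* Minimise the number of descendants: an edge x -> y with y in S would give
   y strictly fewer descendants than x, since x is not a descendant of y. *)
Lemma acyclic_sink D S :
  acyclic D -> S != set0 -> exists2 x, x \in S & forall y, y \in S -> (x, y) \notin D.
Proof.
move=> acD /set0Pn [x0 Sx0].
pose desc x := [set z | connect (edge_rel D) x z].
have [x Sx min_x] := arg_minnP (fun x => #|desc x|) Sx0.
exists x => // y Sy; apply/negP => Dxy.
have := min_x y Sy; apply/negP; rewrite -ltnNge; apply: proper_card.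
apply/properP; split.
  by apply/subsetP => z; rewrite !inE; exact: connect_trans (connect1 Dxy).
by exists x; rewrite !inE ?connect0 //; exact: acD.
Qed.

Definition flips D1 D2 i : {set T} := ch D1 i :&: pa D2 i.
Definition flip_nodes D1 D2 : {set T} := [set i | flips D1 D2 i != set0].

Lemma mem_flips D1 D2 i j : (j \in flips D1 D2 i) = (i \in flips D2 D1 j).
Proof. by rewrite !inE andbC. Qed.

Lemma setD_ch D1 D2 i :
  simple_digraph D2 -> ch D1 i \subset ne D2 i ->
  ch D1 i :\: ch D2 i = flips D1 D2 i.
Proof.
move=> simple2 /subsetP sub; apply/setP => j; rewrite !inE.
case D1ij: ((i, j) \in D1) => /=; last by rewrite andbF.
have := sub j; rewrite !inE D1ij andbT => /(_ isT).
by case: ((i, j) \in D2) (simple2 i j); case: ((j, i) \in D2) => // [] [].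
Qed.

Lemma flip_nodes_acyclic D1 D2 :
  flip_nodes D1 D2 = flip_nodes D2 D1 -> acyclic D1 -> flip_nodes D1 D2 = set0.
Proof.
move=> eq_flip acD1; apply/eqP; apply: contraT => /(acyclic_sink acD1) [x].
rewrite inE => /set0Pn [y fxy] no_succ.
have Sy : y \in flip_nodes D1 D2.
  by rewrite eq_flip inE; apply/set0Pn; exists x; rewrite -mem_flips.
have D1xy : (x, y) \in D1 by move: fxy; rewrite !inE => /andP [].
by have := no_succ y Sy; rewrite D1xy.
Qed.

Lemma flip_nodes0_sub_ch D1 D2 i :
  simple_digraph D2 -> ch D1 i \subset ne D2 i ->
  flip_nodes D1 D2 = set0 -> ch D1 i \subset ch D2 i.
Proof.
move=> simple2 sub /setP/(_ i); rewrite !inE -setD_eq0 setD_ch //.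
by move/negbFE.
Qed.

Section SameSkeleton.
Variables D1 D2 : {set T * T}.
Hypotheses (simple1 : simple_digraph D1) (simple2 : simple_digraph D2).
Hypothesis eq_deg : forall i, #|ch D1 i| = #|ch D2 i|.
Hypothesis sub12 : forall i, ch D1 i \subset ne D2 i.
Hypothesis sub21 : forall i, ch D2 i \subset ne D1 i.

Lemma flip_nodes_sym : flip_nodes D1 D2 = flip_nodes D2 D1.
Proof.
apply/setP => i; rewrite !inE -!card_gt0 -!setD_ch //.
by rewrite (cardsD_sym (eq_deg i)).
Qed.

Lemma flip_nodes0_eq : flip_nodes D1 D2 = set0 -> D1 = D2.
Proof.
move=> flip0; have flip0' : flip_nodes D2 D1 = set0 by rewrite -flip_nodes_sym.
apply: eq_digraph_ch => i; apply/eqP; rewrite eqEsubset.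
by rewrite !flip_nodes0_sub_ch.
Qed.

End SameSkeleton.

End DiGraph.

Theorem theorem4p13 (T : finType) (D1 D2 : {set T * T}) :
  loopless D1 -> loopless D2 ->
  simple_digraph D1 -> simple_digraph D2 ->
  ~ complete_digraph D1 -> ~ complete_digraph D2 ->
  (forall v : T, #|ch D1 v| = #|ch D2 v|) ->
  D1 <> D2 ->
  acyclic D1 \/ acyclic D2 ->
  (exists (i : T) (L : {set T}), parentally_closed D1 i L /\
      #|ch D1 i :&: L| > #|ch D2 i :&: L|) \/
  (exists (i : T) (L : {set T}), parentally_closed D2 i L /\
      #|ch D2 i :&: L| > #|ch D1 i :&: L|).
Proof.
move=> _ _ simple1 simple2 _ _ eq_deg neqD acyc.
case: (boolP [forall i, ch D2 i \subset ne D1 i]) => [/forallP sub21 | /forallPn [i nsub]];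
  last by left; have [L ?] := parentally_closed_ch_gt (eq_deg i) nsub; exists i, L.
case: (boolP [forall i, ch D1 i \subset ne D2 i]) => [/forallP sub12 | /forallPn [i nsub]];
  last by right; have [L ?] := parentally_closed_ch_gt (esym (eq_deg i)) nsub; exists i, L.
have eq_flip := flip_nodes_sym simple1 simple2 eq_deg sub12 sub21.
case: neqD; apply: flip_nodes0_eq simple1 simple2 eq_deg sub12 sub21 _.
case: acyc => [acD1 | acD2]; first exact: flip_nodes_acyclic.
by rewrite eq_flip; apply: flip_nodes_acyclic.
Qed.
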